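(* In the setting below, for all $a,b,c\in A$, $$\sum_{x\in M}\ell_a(x)\ell_b(x)\ell_c(x)=\begin{cases}-1 & a=b=c\in B,\\ 0&\text{otherwise.}\end{cases}$$
   Context: Let $q=2^l$ ($l\ge2$) and $\mathbb F_q$ the field with $q$ elements. Fix integers $k,m,s$ with $q/3\ge k\ge m\ge s>0$ and $2k\le q-m$. Fix $A\subseteq\mathbb F_q$ with $|A|=k$, $B\subseteq A$ with $|B|=s$, and let $M=\mathbb F_q\setminus B$. For $a\in A$, the Lagrange interpolation polynomial is $\ell_a(x)=\prod_{a'\in A\setminus\{a\}}\frac{x-a'}{a-a'}$. *)

From mathcomp Require Import all_boot all_order all_algebra all_field.
Set Implicit Arguments. Unset Strict Implicit. Unset Printing Implicit Defensive.
Import GRing.Theory.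
Local Open Scope ring_scope.

Definition lagrange_basis (F : finFieldType) (A : {set F}) (a x : F) : F :=
  \prod_(a' in A :\ a) ((x - a') / (a - a')).

From mathcomp Require Import all_boot all_order all_algebra all_field.
From mathcomp Require Import fingroup cyclic zify.
Set Implicit Arguments.
Unset Strict Implicit.
Unset Printing Implicit Defensive.

Import GRing.Theory FinRing.Theory.
Local Open Scope ring_scope.

(* The product ell_a ell_b ell_c is a polynomial of degree at most 3(k - 1) < q - 1,
   and over F_q the sum of x^i over all x vanishes for 0 < i < q - 1 (and for i = 0
   because q = 0 in F_q).  Hence the sum over all of F_q is 0, the sum over M is
   minus the sum over B, and on the nodes B the basis polynomials are indicators. *)

Lemma natr_card_eq0 (R : finNzRingType) : #|R|%:R = 0 :> R.
Proof. by have := @expg_cardG _ [set: R]%G 1%R (in_setT _); rewrite zmodXgE cardsT. Qed.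

Lemma exists_expf_neq1 (F : finFieldType) i : (0 < i < #|F|.-1)%N ->
  exists2 y : F, y != 0 & y ^+ i != 1.
Proof.
case/andP=> i_gt0 lt_i_q1; apply/exists_inP/contraT.
rewrite negb_exists_in => /forall_inP all_roots.
have roots : all i.-unity_root (enum [set~ (0 : F)]).
  apply/allP=> z; rewrite mem_enum in_setC1 unity_rootE => z_neq0.
  by have := all_roots z z_neq0; rewrite negbK.
have := max_unity_roots i_gt0 roots (enum_uniq _).
by rewrite -cardE cardsC1 leqNgt lt_i_q1.
Qed.

(* Multiplying by y with y ^+ i != 1 permutes F and scales the sum by y ^+ i. *)
Lemma sum_expf_eq0 (F : finFieldType) i : (0 < i < #|F|.-1)%N ->
  \sum_(x : F) x ^+ i = 0.
Proof.
move=> /exists_expf_neq1[y y_neq0 yi_neq1].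
set S := \sum_(x : F) x ^+ i.
have S_scaled : S = y ^+ i * S.
  rewrite {1}/S (reindex_inj (mulfI y_neq0)) mulr_sumr.
  by apply: eq_bigr => x _; rewrite exprMn.
apply/eqP; move/eqP: S_scaled; rewrite -subr_eq0 -{1}[S]mul1r -mulrBl mulf_eq0.
by rewrite subr_eq0 eq_sym (negbTE yi_neq1).
Qed.

Lemma sum_horner_eq0 (F : finFieldType) (p : {poly F}) :
  (size p < #|F|)%N -> \sum_(x : F) p.[x] = 0.
Proof.
move=> lt_p_q; under eq_bigr => x _ do rewrite horner_coef.
rewrite exchange_big; apply: big1 => i _; rewrite -mulr_sumr.
have [-> | i_gt0] := posnP i.
  by under eq_bigr => x _ do rewrite expr0; rewrite sumr_const natr_card_eq0 mulr0.
rewrite sum_expf_eq0 ?mulr0 // i_gt0 /=.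
by rewrite -subn1 ltn_subRL add1n (leq_ltn_trans (ltn_ord i) lt_p_q).
Qed.

Definition lagrange_poly (F : finFieldType) (A : {set F}) (a : F) : {poly F} :=
  \prod_(a' in A :\ a) ((a - a')^-1 *: ('X - a'%:P)).

Lemma horner_lagrange_poly (F : finFieldType) (A : {set F}) a x :
  (lagrange_poly A a).[x] = lagrange_basis A a x.
Proof.
rewrite horner_prod; apply: eq_bigr => a' _.
by rewrite hornerZ hornerXsubC mulrC.
Qed.

Lemma size_lagrange_poly (F : finFieldType) (A : {set F}) a : a \in A ->
  (size (lagrange_poly A a) <= #|A|)%N.
Proof.
move=> aA; have nz_factor a' : a' \in A :\ a -> (a - a')^-1 != 0.
  by case/setD1P=> a'_neq_a _; rewrite invr_eq0 subr_eq0 eq_sym.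
rewrite size_prod => [|a' /nz_factor nz]; last by rewrite scaler_eq0 negb_or nz polyXsubC_eq0.
rewrite (eq_bigr (fun=> 2%N)) => [|a' /nz_factor nz]; last by rewrite size_scale ?size_XsubC.
by rewrite sum_nat_const (eq_card (B := A :\ a)) // (cardsD1 a A) aA; lia.
Qed.

Lemma lagrange_basis_node (F : finFieldType) (A : {set F}) a x : x \in A ->
  lagrange_basis A a x = (x == a)%:R.
Proof.
move=> xA; have [-> | x_neq_a] := eqVneq x a.
  by apply: big1 => a' /setD1P[a'_neq_a _]; rewrite divff // subr_eq0 eq_sym.
by rewrite /lagrange_basis (bigD1 x) ?in_setD1 ?x_neq_a //= subrr !mul0r.
Qed.

Lemma sum_lagrange_basis3_eq0 (F : finFieldType) (A : {set F}) a b c :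
  a \in A -> b \in A -> c \in A -> (3 * #|A| <= #|F|)%N ->
  \sum_(x : F) lagrange_basis A a x * lagrange_basis A b x * lagrange_basis A c x = 0.
Proof.
move=> aA bA cA le_3A_q.
rewrite -[RHS](@sum_horner_eq0 _ (lagrange_poly A a * lagrange_poly A b * lagrange_poly A c)).
  by apply: eq_bigr => x _; rewrite !hornerM !horner_lagrange_poly.
have := size_polyMleq (lagrange_poly A a * lagrange_poly A b) (lagrange_poly A c).
have := size_polyMleq (lagrange_poly A a) (lagrange_poly A b).
have := size_lagrange_poly aA; have := size_lagrange_poly bA.
have := size_lagrange_poly cA; have : (0 < #|A|)%N by apply/card_gt0P; exists a.
lia.
Qed.

Lemma sum_lagrange_basis3_nodes (F : finFieldType) (A B : {set F}) a b c :
  B \subset A ->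
  \sum_(x in B) lagrange_basis A a x * lagrange_basis A b x * lagrange_basis A c x =
  [&& a == b, b == c & a \in B]%:R.
Proof.
move=> sBA; under eq_bigr => x /(subsetP sBA) xA do rewrite !lagrange_basis_node //.
have [aB | aNB] := boolP (a \in B); last first.
  rewrite !andbF big1 // => x xB; have [x_eq_a | _] := eqVneq x a; last by rewrite !mul0r.
  by move: aNB; rewrite -x_eq_a xB.
rewrite (bigD1 a aB) big1 /= => [|x /andP[_ /negbTE->]]; last by rewrite !mul0r.
by rewrite eqxx mul1r addr0 andbT -natrM mulnb; case: eqVneq => // <-.
Qed.

Theorem lemma5p8 (F : finFieldType) (l k m s : nat)
  (hl : (2 <= l)%N) (hq : #|F| = (2 ^ l)%N)
  (hkq : (3 * k <= #|F|)%N) (hmk : (m <= k)%N) (hsm : (s <= m)%N) (hs : (0 < s)%N)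
  (h2k : (2 * k <= #|F| - m)%N)
  (A B : {set F}) (hA : #|A| = k) (hBA : B \subset A) (hB : #|B| = s)
  (a b c : F) (ha : a \in A) (hb : b \in A) (hc : c \in A) :
  \sum_(x in ~: B) lagrange_basis A a x * lagrange_basis A b x * lagrange_basis A c x =
  (if [&& a == b, b == c & a \in B] then -1 else 0).
Proof.
have := sum_lagrange_basis3_eq0 ha hb hc; rewrite hA => /(_ hkq).
rewrite (bigID (mem B)) /= sum_lagrange_basis3_nodes // => /eqP.
rewrite addrC addr_eq0 => /eqP sum_notB.
rewrite (eq_bigl (fun x => x \notin B)) => [|x]; last by rewrite in_setC.
by rewrite sum_notB; case: [&& _, _ & _]; rewrite ?oppr0.
Qed.
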